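(* Let $D$ be an associative division algebra finite-dimensional over its center $F$, let $\sigma\in\mathrm{Aut}(D)$ be such that $\sigma|_F$ has finite order $m$, let $F_0=\mathrm{Fix}(\sigma)\cap F$, and let $A=(D,\sigma,d)$ with $d\in D\setminus F_0$. Then every automorphism of $A$ of the form $H_{\mathrm{id},k}$ ($k\in F^\times$, $N_{F/F_0}(k)=1$) is an inner automorphism $G_c(\sum_{i=0}^{m-1}a_it^i)=(c^{-1}\sum_{i=0}^{m-1}a_it^i)c$ for some $c\in F^\times$ satisfying $k=\sigma(c)c^{-1}$.
   Context: $N_{F/F_0}$ is the norm of the cyclic Galois extension $F/F_0$. $D[t;\sigma]$ is the twisted polynomial ring: polynomials $\sum a_it^i$ ($a_i\in D$), multiplication determined by $ta=\sigma(a)t$. For $d\in D^\times$, $(D,\sigma,d)$ is the set of polynomials of degree $<m$ in $D[t;\sigma]$ with multiplication (used in the formula for $G_c$) $g\circ h=$ remainder of $gh$ on right division by $t^m-d$; it is a unital algebra over $F_0$ containing $D$. For $k\in F^\times$, $H_{\mathrm{id},k}(\sum_{i=0}^{m-1}a_it^i)=a_0+\sum_{i=1}^{m-1}a_i\big(\prod_{l=0}^{i-1}\sigma^l(k)\big)t^i$. *)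

From HB Require Import structures.
From mathcomp Require Import all_boot all_order all_algebra all_field.
Set Implicit Arguments. Unset Strict Implicit. Unset Printing Implicit Defensive.
Import GRing.Theory.
Local Open Scope ring_scope.

(* Elements of A = (D, sigma, d): polynomials sum_{i<m} a_i t^i, encoded by
   their coefficient function 'I_m -> D. *)

(* Multiplication of A: remainder of the product g h in D[t;sigma] on right
   division by t^m - d.  Since (a t^i)(b t^j) = a sigma^i(b) t^(i+j) and
   c t^(m+r) = c sigma^r(d) t^r + (c t^r)(t^m - d), the remainder is: *)
Definition cyc_mul (D : nzRingType) (sigma : D -> D) (d : D) (m : nat)
    (g h : 'I_m -> D) : 'I_m -> D :=
  fun r => \sum_(i < m) \sum_(j < m)
     (if (i + j == r)%N then g i * iter i sigma (h j)
      else if (i + j == r + m)%N then g i * iter i sigma (h j) * iter r sigma d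
      else 0).

Definition cyc_cst (D : nzRingType) (m : nat) (a : D) : 'I_m -> D :=
  fun i => if (val i == 0)%N then a else 0.

Definition H_id (D : nzRingType) (sigma : D -> D) (m : nat) (k : D)
    (x : 'I_m -> D) : 'I_m -> D :=
  fun i => x i * \prod_(l < i) iter l sigma k.

Definition G_inner (D : unitRingType) (sigma : D -> D) (d : D) (m : nat) (c : D)
    (x : 'I_m -> D) : 'I_m -> D :=
  cyc_mul sigma d (cyc_mul sigma d (@cyc_cst D m c^-1) x) (@cyc_cst D m c).

(* f is an automorphism of the F_0-algebra A = (D, sigma, d), where
   F_0 = { a in F | sigma a = a } and F is embedded in D via a |-> a%:A. *)
Definition is_cyc_aut (F : fieldType) (D : falgType F) (sigma : D -> D) (d : D)
    (m : nat) (f : ('I_m -> D) -> ('I_m -> D)) : Prop :=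
  [/\ bijective f,
      (forall x y i, f (fun j => x j + y j) i = f x i + f y i),
      (forall x y i, f (cyc_mul sigma d x y) i = cyc_mul sigma d (f x) (f y) i),
      (forall i, f (@cyc_cst D m 1) i = @cyc_cst D m 1 i) &
      (forall (a : F), sigma a%:A = a%:A ->
         forall x i, f (fun j => a%:A * x j) i = a%:A * f x i)].

(* Norm N_{F/F_0}(k) = prod_{l<m} sigma^l(k) (Gal(F/F_0) = <sigma|_F>, order m) *)
Definition cyc_norm (D : nzRingType) (sigma : D -> D) (m : nat) (k : D) : D :=
  \prod_(l < m) iter l sigma k.

From HB Require Import structures.
From mathcomp Require Import all_boot all_order all_algebra all_field.
From mathcomp Require Import ring zify.
From Stdlib Require Import Classical.
Set Implicit Arguments.
Unset Strict Implicit.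
Unset Printing Implicit Defensive.
Import GRing.Theory.
Local Open Scope ring_scope.

(* The restriction of sigma to the centre F is a field automorphism tau of
   order m, and N(k) = 1.  Hilbert's Theorem 90 for the cyclic extension
   F/F_0, proved with the resolvent b = sum_(i < m) N_i(k) tau^i(y) (nonzero
   for some y by Artin's independence of characters), yields c in F^x with
   tau(c) = k c, hence tau^i(c) = N_i(k) c where N_i(k) = prod_(l < i)
   tau^l(k).  As c is central, G_c multiplies the i-th coefficient by
   c^-1 sigma^i(c) = N_i(k), which is what H_(id,k) does. *)

Lemma characters_independent (R : pzSemiRingType) (L : idomainType) (n : nat)
    (f : nat -> R -> L) (a : nat -> L) :
  (forall i, monoid_morphism (f i)) ->
  (forall i j, (i < j < n)%N -> exists y, f i y != f j y) ->
  (forall x, \sum_(i < n) a i * f i x = 0) ->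
  forall i, (i < n)%N -> a i = 0.
Proof.
move=> fM; elim: n a => [//|n IHn] a f_neq rel.
have rel_n x : \sum_(i < n) a i * f i x = - (a n * f n x).
  by apply/eqP; rewrite -addr_eq0; move/eqP: (rel x); rewrite big_ord_recr.
have a_lt i : (i < n)%N -> a i = 0.
  move=> lt_in; have [y f_iny] := f_neq i n (introT andP (conj lt_in (ltnSn n))).
  (* The relation at [y * x] minus [f n y] times the relation at [x] has no
     [n]-th term. *)
  have /eqP : a i * (f i y - f n y) = 0.
    apply: (IHn (fun j => a j * (f j y - f n y))) lt_in.
      by move=> j l /andP[jl ln]; apply: f_neq; rewrite jl ltnW.
    move=> x; have -> : \sum_(j < n) a j * (f j y - f n y) * f j x =
        \sum_(j < n) a j * f j (y * x) - f n y * \sum_(j < n) a j * f j x.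
      by rewrite mulr_sumr -sumrB; apply: eq_bigr => j _; rewrite (fM j).2; ring.
    by rewrite !rel_n (fM n).2; ring.
  by rewrite mulf_eq0 subr_eq0 (negbTE f_iny) orbF => /eqP.
move=> i; rewrite ltnS leq_eqVlt => /orP[/eqP ->|]; last exact: a_lt.
have := rel_n 1; rewrite big1 => [|j _]; last by rewrite a_lt ?mul0r.
by move/eqP; rewrite eq_sym oppr_eq0 (fM n).1 mulr1 => /eqP.
Qed.

Lemma cyc_mul_cst_l (D : nzRingType) (sigma : D -> D) (d : D) (m : nat)
    (u : D) (x : 'I_m -> D) (r : 'I_m) :
  cyc_mul sigma d (cyc_cst u) x r = u * x r.
Proof.
move: x r; case: m => [_ []//|m] x r.
rewrite /cyc_mul big_ord_recl [X in _ + X]big1 ?addr0 => [|i _]; last first.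
  by rewrite big1 // => j _; rewrite /cyc_cst /= !mul0r !if_same.
rewrite (bigD1 r) //= [X in _ + X]big1 ?addr0 => [|j /negbTE j_neq_r].
  by rewrite eqxx.
by rewrite add0n [j == r :> nat]j_neq_r ltn_eqF ?ltn_addl.
Qed.

Lemma cyc_mul_cst_r (D : nzRingType) (sigma : {additive D -> D}) (d : D) (m : nat)
    (v : D) (x : 'I_m -> D) (r : 'I_m) :
  cyc_mul sigma d x (cyc_cst v) r = x r * iter r sigma v.
Proof.
move: x r; case: m => [_ []//|m] x r.
have iter0 i : iter i sigma 0 = 0 by elim: i => //= i ->; rewrite raddf0.
rewrite /cyc_mul (bigD1 r) //= [X in _ + X]big1 ?addr0 => [|i /negbTE i_neq_r].
  rewrite big_ord_recl big1 ?addr0 => [|j _]; first by rewrite addn0 eqxx.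
  by rewrite /cyc_cst /= iter0 !(mulr0, mul0r) !if_same.
rewrite big_ord_recl big1 ?addr0 => [|j _]; last first.
  by rewrite /cyc_cst /= iter0 !(mulr0, mul0r) !if_same.
by rewrite addn0 [i == r :> nat]i_neq_r ltn_eqF ?ltn_addl.
Qed.

Lemma iter_rmorph_monoid (R : pzSemiRingType) (f : {rmorphism R -> R}) (i : nat) :
  monoid_morphism (iter i f).
Proof.
elim: i => [|i [iter1 iterM]]; first by split.
by split=> [|x y] /=; rewrite ?iter1 ?iterM (rmorph1, rmorphM).
Qed.

Lemma prod_iter_recl (R : pzSemiRingType) (f : {rmorphism R -> R})
    (k : R) (i : nat) :
  \prod_(l < i.+1) iter l f k = k * f (\prod_(l < i) iter l f k).
Proof. by rewrite big_ord_recl rmorph_prod. Qed.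

Lemma iter_rmorph_eigen (R : comPzSemiRingType) (f : {rmorphism R -> R})
    (k c : R) :
  f c = k * c -> forall i, iter i f c = (\prod_(l < i) iter l f k) * c.
Proof.
move=> fc; elim=> [|i IHi]; first by rewrite big_ord0 mul1r.
by rewrite iterS IHi rmorphM fc prod_iter_recl mulrCA mulrA.
Qed.

Lemma sum_shift_periodic (V : nmodType) (m : nat) (g : nat -> V) :
  g m = g 0%N -> \sum_(i < m) g i.+1 = \sum_(i < m) g i.
Proof.
case: m => [|m] gm; first by rewrite !big_ord0.
by rewrite big_ord_recr big_ord_recl gm addrC.
Qed.

Section CyclicHilbert90.

Variables (L : fieldType) (tau : {rmorphism L -> L}) (m : nat).
Hypotheses (m_gt0 : (0 < m)%N) (tau_m : forall a, iter m tau a = a).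
Hypothesis tau_order : forall n, (0 < n < m)%N -> exists a, iter n tau a != a.

Lemma iter_tau_neq i j : (i < j < m)%N -> exists y, iter i tau y != iter j tau y.
Proof.
move=> /andP[lt_ij lt_jm]; have [a tau_a] := @tau_order (j - i)%N ltac:(lia).
exists (iter (m - i) tau a); rewrite -!iterD.
have -> : (i + (m - i) = m)%N by lia.
have -> : (j + (m - i) = j - i + m)%N by lia.
by rewrite iterD !tau_m eq_sym.
Qed.

Lemma hilbert90 k : \prod_(l < m) iter l tau k = 1 ->
  exists2 c, c != 0 & tau c = k * c.
Proof.
move=> norm_k; pose P i := \prod_(l < i) iter l tau k.
pose g y i := P i * iter i tau y.
have [y /eqP b_neq0] : exists y, ~ (\sum_(i < m) g y i = 0).
  apply: not_all_ex_not => rel.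
  have := characters_independent (iter_rmorph_monoid tau) iter_tau_neq rel m_gt0.
  by rewrite /P big_ord0 => /eqP; rewrite oner_eq0.
set b := \sum_(i < m) g y i in b_neq0.
have tau_b : k * tau b = b.
  rewrite rmorph_sum mulr_sumr -[RHS]sum_shift_periodic; last first.
    by rewrite /g /P norm_k tau_m big_ord0.
  by apply: eq_bigr => i _; rewrite /g rmorphM mulrA -prod_iter_recl.
have k_neq0 : k != 0 by apply: contraNneq b_neq0 => k0; rewrite -tau_b k0 mul0r.
exists b^-1; first by rewrite invr_eq0.
by rewrite fmorphV -[in RHS]tau_b invfM mulVKf.
Qed.

End CyclicHilbert90.

Section CentreRestriction.

Variables (F : fieldType) (D : falgType F) (sigma : {rmorphism D -> D}).
Hypothesis centreD :
  forall x : D, (forall y : D, x * y = y * x) -> exists a : F, x = a%:A.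
Hypothesis sigma_bij : bijective sigma.

Let alg_inj : injective (GRing.in_alg D) := fmorph_inj _.

Lemma sigma_scalar (a : F) : exists b : F, sigma a%:A == b%:A.
Proof.
have [sigma_inv _ sigmaK] := sigma_bij.
have [b ->] : exists b : F, sigma a%:A = b%:A.
  by apply: centreD => y; rewrite -(sigmaK y) -!rmorphM mulr_algl mulr_algr.
by exists b.
Qed.

Definition sigmaF (a : F) : F := xchoose (sigma_scalar a).

Lemma sigmaF_alg (a : F) : (sigmaF a)%:A = sigma a%:A.
Proof. exact/esym/eqP/(xchooseP (sigma_scalar a)). Qed.

Let algM (a b : F) : (a * b)%:A = a%:A * b%:A :> D :=
  rmorphM (GRing.in_alg D) a b.

Lemma sigmaF_is_zmod_morphism : zmod_morphism sigmaF.
Proof.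
by move=> a b; apply: alg_inj; rewrite /= scalerBl !sigmaF_alg scalerBl rmorphB.
Qed.

Lemma sigmaF_is_monoid_morphism : monoid_morphism sigmaF.
Proof.
split=> [|a b]; apply: alg_inj; rewrite /= ?algM !sigmaF_alg ?algM ?rmorphM //.
by rewrite scale1r rmorph1.
Qed.

HB.instance Definition _ := GRing.isZmodMorphism.Build F F sigmaF
  sigmaF_is_zmod_morphism.
HB.instance Definition _ := GRing.isMonoidMorphism.Build F F sigmaF
  sigmaF_is_monoid_morphism.

Lemma iter_sigmaF_alg (i : nat) (a : F) :
  (iter i sigmaF a)%:A = iter i sigma a%:A.
Proof. by elim: i => //= i <-; rewrite sigmaF_alg. Qed.

Lemma hilbert90_centre (m : nat) (k : F) : (0 < m)%N ->
  (forall a : F, iter m sigma a%:A = a%:A) ->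
  (forall n, (0 < n < m)%N -> exists a : F, iter n sigma a%:A != a%:A) ->
  cyc_norm sigma m k%:A = 1 ->
  exists2 c : F, c != 0 &
    forall i, iter i sigma c%:A = (\prod_(l < i) iter l sigma k%:A) * c%:A.
Proof.
move=> m_gt0 sigma_m sigma_order norm_k.
have alg_prod i :
    (\prod_(l < i) iter l sigmaF k)%:A = \prod_(l < i) iter l sigma k%:A.
  rewrite -[LHS]/(GRing.in_alg D _) rmorph_prod.
  by apply: eq_bigr => l _; apply: iter_sigmaF_alg.
have sigmaF_m a : iter m sigmaF a = a.
  by apply: alg_inj; rewrite /= iter_sigmaF_alg sigma_m.
have sigmaF_order n : (0 < n < m)%N -> exists a, iter n sigmaF a != a.
  by move=> /sigma_order[a]; exists a; rewrite -(inj_eq alg_inj) /= iter_sigmaF_alg.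
have normF_k : \prod_(l < m) iter l sigmaF k = 1.
  by apply: alg_inj; rewrite /= alg_prod scale1r.
have [c c_neq0 sigmaF_c] := hilbert90 m_gt0 sigmaF_m sigmaF_order normF_k.
exists c => // i.
by rewrite -iter_sigmaF_alg (iter_rmorph_eigen sigmaF_c) algM alg_prod.
Qed.

End CentreRestriction.

Theorem proposition3p4 (F : fieldType) (D : falgType F)
  (sigma : {rmorphism D -> D}) (m : nat) (d : D) (k : F) :
  (* D is a division algebra *)
  (forall x : D, x != 0 -> x \is a GRing.unit) ->
  (* F (embedded as a |-> a%:A) is the center of D *)
  (forall x : D, (forall y : D, x * y = y * x) -> exists a : F, x = a%:A) ->
  (* sigma is an automorphism of D *)
  bijective sigma ->
  (* sigma restricted to F has finite order m *)
  (0 < m)%N ->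
  (forall a : F, iter m sigma a%:A = a%:A) ->
  (forall n : nat, (0 < n < m)%N -> exists a : F, iter n sigma a%:A != a%:A) ->
  (* d in D \ F_0, where F_0 = Fix(sigma) cap F *)
  ~ (exists a : F, d = a%:A /\ sigma a%:A = a%:A) ->
  (* k in F^x with N_{F/F_0}(k) = 1 *)
  k != 0 ->
  cyc_norm sigma m k%:A = 1 ->
  (* H_{id,k} is an automorphism of A = (D, sigma, d) *)
  is_cyc_aut sigma d (@H_id D sigma m k%:A) ->
  exists c : F, [/\ c != 0,
    k%:A = sigma c%:A * (c%:A)^-1 &
    forall (x : 'I_m -> D) (i : 'I_m),
      H_id sigma k%:A x i = G_inner sigma d c%:A x i].
Proof.
move=> _ centreD sigma_bij m_gt0 sigma_m sigma_order _ _ norm_k _.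
have [c c_neq0 iter_c] :=
  hilbert90_centre centreD sigma_bij m_gt0 sigma_m sigma_order norm_k.
have c_unit : (c%:A : D) \is a GRing.unit.
  by apply: (rmorph_unit (GRing.in_alg D)); rewrite unitfE.
exists c; split=> // [|x i].
  by rewrite -[sigma _]/(iter 1 sigma _) iter_c big_ord1 mulrK.
rewrite /H_id /G_inner cyc_mul_cst_r cyc_mul_cst_l iter_c mulrA.
have c_central (y : D) : y * c%:A = c%:A * y by rewrite mulr_algl mulr_algr.
by rewrite c_central -!mulrA mulVKr.
Qed.
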